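(* Let $k \geq 1$ and let $G_0,\dots,G_{k-1}$ be bipartite graphs such that for all $i \neq j$ in $\{0,\dots,k-1\}$, $V(G_i)\cap V(G_j) = \{g\}$ for a single common vertex $g$. Let $G = \bigcup_{i=0}^{k-1} G_i$ (vertex set $\bigcup_i V(G_i)$, edge set $\bigcup_i E(G_i)$). Suppose that for each $i$, $\phi_{G_i}$ is a well-begun $l_i$-encoding of $G_i$. Then $G$ has a well-begun $l$-encoding, where $l = \max_{0\le i\le k-1} l_i + \lceil \log_2 k \rceil$.
   Context: For a graph $G=(V,E)$ and $l\in\mathbb{N}$, an $l$-encoding of $G$ is a function $\phi: V \to \mathbb{N}^l$ such that $\phi$ is injective and for all $u,v \in V$, $\{u,v\}\in E$ if and only if $\phi(u)$ and $\phi(v)$ differ in all $l$ coordinates. An $l$-encoding $\phi$ of $G$ is well-begun if the first coordinate of $\phi(v)$ lies in $\{0,1,\dots,\chi(G)-1\}$ for every vertex $v$, where $\chi(G)$ is the chromatic number of $G$. *)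

From mathcomp Require Import all_boot.
Set Implicit Arguments. Unset Strict Implicit. Unset Printing Implicit Defensive.

Section Graphs.
Variable T : finType.

Definition simple_graph (V : {set T}) (E : rel T) : Prop :=
  [/\ symmetric E, irreflexive E & forall u v, E u v -> (u \in V) && (v \in V)].

Definition bipartite (V : {set T}) (E : rel T) : Prop :=
  exists f : T -> bool, forall u v, u \in V -> v \in V -> E u v -> f u != f v.

Definition colorableb (V : {set T}) (E : rel T) (n : nat) : bool :=
  [exists c : {ffun T -> 'I_n},
     [forall u, forall v,
        [&& u \in V, v \in V, u != v & E u v] ==> (c u != c v)]].

Lemma colorable_card (V : {set T}) (E : rel T) : exists n, colorableb V E n.
Proof.
exists #|T|; apply/existsP; exists [ffun x => enum_rank x].
apply/forallP => u; apply/forallP => v; apply/implyP => /and4P [_ _ huv _].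
rewrite !ffunE; apply: contra huv => /eqP h; apply/eqP.
exact: enum_rank_inj h.
Qed.

Definition chromatic (V : {set T}) (E : rel T) : nat :=
  ex_minn (colorable_card V E).

Definition encoding (V : {set T}) (E : rel T) (l : nat)
  (phi : T -> l.-tuple nat) : Prop :=
  {in V &, injective phi} /\
  (forall u v, u \in V -> v \in V -> u != v ->
     (E u v <-> forall j : 'I_l, tnth (phi u) j != tnth (phi v) j)).

Definition well_begun_encoding (V : {set T}) (E : rel T) (l : nat)
  (phi : T -> l.-tuple nat) : Prop :=
  encoding V E phi /\
  (forall v, v \in V -> forall j : 'I_l, val j = 0 ->
     tnth (phi v) j < chromatic V E).

Definition unionV (k : nat) (V : 'I_k -> {set T}) : {set T} :=
  \bigcup_(i < k) V i.
Definition unionE (k : nat) (E : 'I_k -> rel T) : rel T :=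
  fun u v => [exists i : 'I_k, E i u v].

End Graphs.

From mathcomp Require Import all_boot zify.
Set Implicit Arguments. Unset Strict Implicit. Unset Printing Implicit Defensive.

(* Let G_0, ..., G_(k-1) pairwise meet exactly in the vertex g, let phi_i be a
   well-begun l_i-encoding of G_i, L = max l_i and m = ceil(log2 k).  Each
   phi_i is first normalized: in every coordinate the value of g is exchanged
   with 0, so g is encoded by 0 everywhere; the first coordinate is a proper
   colouring of G_i by 0 and 1 (G_i is bipartite).  The normalized word is
   padded with its colour up to length L, and followed by m letters that
   compare the bits of the label i with the colour (g gets the letter 2).
   Within one G_i these codes still encode G_i exactly; the code of g is the
   same in all parts; and two non-shared vertices of distinct parts agree in
   some letter (they are not adjacent in the union) without having equal codes.
   When L = 0 every part, hence the union, has at most one vertex, and the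
   all-zero word is a well-begun encoding. *)

Definition swap0 (a x : nat) := if x == a then 0 else if x == 0 then a else x.

Lemma swap0_inj a : injective (swap0 a).
Proof. move=> x y; rewrite /swap0; do !case: eqP; lia. Qed.

Lemma swap0_lt a x n : x < n -> a < n -> swap0 a x < n.
Proof. rewrite /swap0; do !case: eqP => //; lia. Qed.

Lemma swap0_id a : swap0 a a = 0.
Proof. by rewrite /swap0 eqxx. Qed.

Definition bit (t i : nat) : bool := odd (i %/ 2 ^ t).

Lemma bit_half t i : bit t.+1 i = bit t i./2.
Proof. by rewrite /bit expnS divnMA divn2. Qed.

Lemma bit_diff m i j : i < 2 ^ m -> j < 2 ^ m -> i != j ->
  exists t : 'I_m, bit t i != bit t j.
Proof.
elim: m i j => [|m IH] i j hi hj hij; first by move: hi hj hij; rewrite expn0; lia.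
case: (eqVneq (odd i) (odd j)) => hodd; last first.
  by exists ord0; rewrite /bit expn0 !divn1.
have hhalf : i./2 != j./2.
  apply: contra hij => /eqP hh.
  by rewrite -[i]odd_double_half -[j]odd_double_half hodd hh.
have half_lt x : x < 2 ^ m.+1 -> x./2 < 2 ^ m by rewrite expnS -divn2; lia.
have [t ht] := IH _ _ (half_lt _ hi) (half_lt _ hj) hhalf.
by exists (lift ord0 t); rewrite /= /bump /= !bit_half.
Qed.

Section Chromatic.
Variable T : finType.
Implicit Types (V : {set T}) (E : rel T).

Lemma chromatic_min V E n : colorableb V E n -> chromatic V E <= n.
Proof. by rewrite /chromatic; case: ex_minnP => m _; apply. Qed.

Lemma chromatic_colorable V E : colorableb V E (chromatic V E).
Proof. by rewrite /chromatic; case: ex_minnP. Qed.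

(* A colouring with no colours exists only on an empty type. *)
Lemma chromatic_gt0 V E (u : T) : 0 < chromatic V E.
Proof.
have /existsP [c _] := chromatic_colorable V E.
by move: (c u); case: (chromatic V E) => // [[]].
Qed.

Lemma chromatic_bipartite V E : bipartite V E -> chromatic V E <= 2.
Proof.
case=> side hside; apply: chromatic_min; apply/existsP.
exists [ffun x => inord (side x) : 'I_2].
apply/forallP => u; apply/forallP => v; apply/implyP => /and4P [hu hv _ huv].
rewrite !ffunE; apply: contra (hside _ _ hu hv huv) => /eqP /(congr1 val) /=.
by rewrite !inordK //; case: (side u); case: (side v).
Qed.

Lemma chromatic_sub V V' E E' :
  V \subset V' -> subrel E E' -> chromatic V E <= chromatic V' E'.
Proof.
move=> sVV' sEE'; apply: chromatic_min.
have /existsP [c hc] := chromatic_colorable V' E'.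
apply/existsP; exists c; apply/forallP => u; apply/forallP => v; apply/implyP.
move=> /and4P [hu hv huv he]; apply: (implyP (forallP (forallP hc u) v)).
by rewrite (subsetP sVV' _ hu) (subsetP sVV' _ hv) huv sEE'.
Qed.

Lemma subsingleton_encoding V E n :
  {in V &, forall u v, u = v} ->
  well_begun_encoding V E (fun _ => [tuple 0 | _ < n]).
Proof.
move=> single; split; [split|].
- by move=> u v hu hv _; apply: single.
- by move=> u v hu hv; rewrite (single u v hu hv) eqxx.
- by move=> v _ j _; rewrite tnth_mktuple; apply: chromatic_gt0 v.
Qed.

End Chromatic.

Section Normalize.
Variables (T : finType) (V : {set T}) (E : rel T) (l : nat).
Variables (phi : T -> l.-tuple nat) (g : T) (L m lab : nat).

Definition anchor (c : nat) : nat := if g \in V then nth 0 (phi g) c else 0.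
Definition coord (u : T) (c : nat) : nat := swap0 (anchor c) (nth 0 (phi u) c).

(* The normalized first coordinate; it is a proper colouring by 0 and 1. *)
Definition colour (u : T) : nat := if 0 < l then coord u 0 else 0.

Definition main_coord (u : T) (c : nat) : nat :=
  if c < l then coord u c else colour u.

Definition label_coord (u : T) (t : nat) : nat :=
  if u == g then 2 else bit t lab == (colour u == 1).

Definition code (u : T) : (L + m).-tuple nat :=
  [tuple if j < L then main_coord u j else label_coord u (j - L) | j < L + m].

Hypothesis wb : well_begun_encoding V E phi.
Hypothesis bip : bipartite V E.
Hypothesis lL : l <= L.

Lemma encoding_length0 : l = 0 -> {in V &, forall u v, u = v}.
Proof.
move=> l0 u v hu hv; apply: wb.1.1 => //; apply: eq_from_tnth => j.
by have := ltn_ord j; rewrite [X in _ < X]l0.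
Qed.

Lemma code_anchor : g \in V -> code g = [tuple if j < L then 0 else 2 | j < L + m].
Proof.
move=> gV; apply: eq_from_tnth => j; rewrite !tnth_mktuple /label_coord eqxx.
by rewrite /main_coord /colour /coord /anchor gV !swap0_id; do !case: ifP.
Qed.

Lemma coord_edge u v : u \in V -> v \in V -> u != v ->
  (E u v <-> forall c, c < l -> coord u c != coord v c).
Proof.
move=> hu hv uv; rewrite (wb.1.2 u v hu hv uv); split.
  move=> hdiff c hc; apply: contra (hdiff (Ordinal hc)) => /eqP /swap0_inj.
  by rewrite !(tnth_nth 0) => ->.
move=> hdiff j; apply: contra (hdiff j (ltn_ord j)).
by rewrite !(tnth_nth 0) /coord => /eqP ->.
Qed.

Lemma colour_lt_chromatic u : u \in V -> colour u < chromatic V E.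
Proof.
move=> hu; rewrite /colour; case: ifP => l_gt0; last by apply: chromatic_gt0 u.
have first_lt x : x \in V -> nth 0 (phi x) 0 < chromatic V E.
  by move=> hx; have := wb.2 x hx (Ordinal l_gt0) erefl; rewrite (tnth_nth 0).
apply: swap0_lt; first exact: first_lt.
by rewrite /anchor; case: ifP => [/first_lt|_] //; apply: chromatic_gt0 u.
Qed.

Lemma colour_lt2 u : u \in V -> colour u < 2.
Proof. by move=> hu; apply: leq_trans (colour_lt_chromatic hu) (chromatic_bipartite bip). Qed.

Lemma colour_edge u v : u \in V -> v \in V -> u != v -> E u v -> colour u != colour v.
Proof.
move=> hu hv uv huv; case: (posnP l) => [l0|l_gt0].
  by case/eqP: uv; apply: encoding_length0.
by rewrite /colour l_gt0; apply: (coord_edge hu hv uv).1.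
Qed.

Lemma code_first u (o : 'I_(L + m)) : 0 < L -> val o = 0 -> tnth (code u) o = colour u.
Proof.
move=> L_gt0 o0; rewrite tnth_mktuple o0 L_gt0 /main_coord.
by case: ifP => // l_gt0; rewrite /colour l_gt0.
Qed.

Lemma code_label u (o : 'I_(L + m)) : u != g -> L <= o ->
  tnth (code u) o = (bit (o - L) lab == (colour u == 1)).
Proof. by move=> ug Lo; rewrite tnth_mktuple ltnNge Lo /label_coord (negbTE ug). Qed.

Lemma code_main u (o : 'I_(L + m)) : o < l -> tnth (code u) o = coord u o.
Proof. by move=> ol; rewrite tnth_mktuple (leq_trans ol lL) /main_coord ol. Qed.

Lemma main_pos (c : 'I_l) : c < L + m.
Proof. exact: leq_trans (ltn_ord c) (leq_trans lL (leq_addr _ _)). Qed.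

Lemma code_inj : {in V &, injective code}.
Proof.
move=> u v hu hv huv; apply: wb.1.1 => //; apply: eq_from_tnth => c.
have := congr1 (fun w => tnth w (Ordinal (main_pos c))) huv.
by rewrite !code_main //= => /swap0_inj; rewrite !(tnth_nth 0).
Qed.

Lemma code_edge u v : u \in V -> v \in V -> u != v ->
  (E u v <-> forall j, tnth (code u) j != tnth (code v) j).
Proof.
move=> hu hv uv; split => [huv j|hdiff]; last first.
  apply/(coord_edge hu hv uv) => c hc.
  by have := hdiff (Ordinal (main_pos (Ordinal hc))); rewrite !code_main.
have col_diff := colour_edge hu hv uv huv.
rewrite !tnth_mktuple; case: ifP => _.
  by rewrite /main_coord; case: ifP => // hc; apply: (coord_edge hu hv uv).1.
rewrite /label_coord; case: (eqVneq u g) => [ug|ug]; case: (eqVneq v g) => [vg|vg].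
- by case/eqP: uv; rewrite ug vg.
- by case: (bit _ lab == _).
- by case: (bit _ lab == _).
move: (colour_lt2 hu) (colour_lt2 hv) col_diff.
by case: (colour u) => [|[|]] //; case: (colour v) => [|[|]] //; case: bit.
Qed.

End Normalize.

Section Union.
Variables (T : finType) (k : nat) (V : 'I_k -> {set T}) (E : 'I_k -> rel T).
Variables (l : 'I_k -> nat) (phi : forall i : 'I_k, T -> (l i).-tuple nat) (g : T).
Hypothesis k_gt0 : 0 < k.
Hypothesis simple : forall i, simple_graph (V i) (E i).
Hypothesis bip : forall i, bipartite (V i) (E i).
Hypothesis shared : forall i j : 'I_k, i != j -> V i :&: V j = [set g].
Hypothesis wb : forall i, well_begun_encoding (V i) (E i) (phi i).

Local Notation L := (\max_(i < k) l i).
Local Notation m := (up_log 2 k).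

Lemma shared_only i j u : i != j -> u \in V i -> u \in V j -> u = g.
Proof.
move=> ij hi hj; have : u \in V i :&: V j by rewrite inE hi hj.
by rewrite shared // inE => /eqP.
Qed.

Lemma shared_in i j : i != j -> g \in V i.
Proof. by move=> ij; have /setIP [] : g \in V i :&: V j by rewrite shared // inE. Qed.

Lemma length_le_max i : l i <= L.
Proof. exact: leq_bigmax. Qed.

Definition code_in (i : 'I_k) : T -> (L + m).-tuple nat := code (V i) (phi i) g L m i.

(* Each vertex is encoded through some graph containing it; only [g] has a
   choice, and all choices agree on it. *)
Definition home (u : T) : 'I_k := odflt (Ordinal k_gt0) [pick i | u \in V i].
Definition psi (u : T) : (L + m).-tuple nat := code_in (home u) u.

Lemma psi_in i u : u \in V i -> psi u = code_in i u.
Proof.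
move=> hu; rewrite /psi /home; case: pickP => [j hj|none] /=; last by have := none i; rewrite hu.
case: (eqVneq j i) => [-> //|ji]; have ug := shared_only ji hj hu.
by move: hj hu; rewrite ug => hj hu; rewrite /code_in !code_anchor.
Qed.

Lemma union_edge i u v : u \in V i -> v \in V i -> u != v -> (unionE E u v <-> E i u v).
Proof.
move=> hu hv uv; split=> [/existsP [h huv]|huv]; last by apply/existsP; exists i.
case: (eqVneq h i) => [<- //|hi]; have [_ _ /(_ _ _ huv) /andP [hu' hv']] := simple h.
by case/eqP: uv; rewrite (shared_only hi hu' hu) (shared_only hi hv' hv).
Qed.

Lemma vertex_pair_cases u v : u \in unionV V -> v \in unionV V ->
  (exists i, u \in V i /\ v \in V i) \/
  (exists i j, [/\ i != j, u \in V i, v \in V j, u != g & v != g]).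
Proof.
move=> /bigcupP [i _ hu] /bigcupP [j _ hv].
case: (eqVneq i j) => [ij|ij]; first by left; exists j; split; rewrite // -ij.
case: (eqVneq u g) => [ug|ug].
  by left; exists j; rewrite ug (@shared_in j i) // eq_sym.
case: (eqVneq v g) => [vg|vg]; first by left; exists i; rewrite vg (shared_in ij).
by right; exists i, j.
Qed.

Lemma cross_nonadjacent i j u v : i != j -> u \in V i -> v \in V j ->
  u != g -> v != g -> ~ unionE E u v.
Proof.
move=> ij hu hv ug vg /existsP [h huv].
have [_ _ /(_ _ _ huv) /andP [hu' hv']] := simple h.
case: (eqVneq h i) => [ehi|hi]; last by case/eqP: ug; apply: shared_only hi hu' hu.
case: (eqVneq h j) => [ehj|hj]; last by case/eqP: vg; apply: shared_only hj hv' hv.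
by case/eqP: ij; rewrite -ehi -ehj.
Qed.

(* Non-shared vertices of distinct parts get codes that agree somewhere
   (they are not adjacent) but are distinct: equal colours agree in the
   first letter and differ where the labels [i] and [j] differ in binary;
   distinct colours disagree in the first letter and agree there. *)
Lemma cross_code i j u v : i != j -> u \in V i -> v \in V j -> u != g -> v != g ->
  (exists o, tnth (code_in i u) o = tnth (code_in j v) o) /\ code_in i u != code_in j v.
Proof.
move=> ij hu hv ug vg; set cu := colour (V i) (phi i) g u; set cv := colour (V j) (phi j) g v.
have l_gt0 : 0 < l i.
  rewrite lt0n; apply: contra ug => /eqP l0.
  apply/eqP; exact: (encoding_length0 (wb i) l0 hu (shared_in ij)).
have L_gt0 : 0 < L + m by apply: leq_trans l_gt0 (leq_trans (length_le_max i) (leq_addr _ _)).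
have k_le : k <= 2 ^ m by apply: up_logP.
have [t ht] := bit_diff (leq_trans (ltn_ord i) k_le) (leq_trans (ltn_ord j) k_le) ij.
have Lt_lt : L + t < L + m by rewrite ltn_add2l.
pose o0 := Ordinal L_gt0; pose ot := Ordinal Lt_lt.
have first : tnth (code_in i u) o0 = cu /\ tnth (code_in j v) o0 = cv.
  by split; apply: code_first; rewrite //= (leq_trans l_gt0 (length_le_max i)).
have label : tnth (code_in i u) ot = (bit t i == (cu == 1)) /\
             tnth (code_in j v) ot = (bit t j == (cv == 1)).
  by split; rewrite code_label //= ?leq_addr // addKn.
have cu_lt2 : cu < 2 by exact: (colour_lt2 g (wb i) (bip i) hu).
have cv_lt2 : cv < 2 by exact: (colour_lt2 g (wb j) (bip j) hv).
case: (eqVneq cu cv) => [same|diff].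
  split; first by exists o0; rewrite first.1 first.2 same.
  apply/eqP => /(congr1 (fun w => tnth w ot)); rewrite label.1 label.2 same.
  by move: ht; case: bit; case: bit; case: (_ == 1).
split; last by apply/eqP => /(congr1 (fun w => tnth w o0)); rewrite first.1 first.2; apply/eqP.
exists ot; rewrite label.1 label.2; clear first label.
move: ht diff cu_lt2 cv_lt2.
by case: cu => [|[|]] //; case: cv => [|[|]] //; case: bit; case: bit.
Qed.

Lemma psi_encoding : 0 < L -> well_begun_encoding (unionV V) (unionE E) psi.
Proof.
move=> L_gt0; split; [split|].
- move=> u v hu hv huv; case: (vertex_pair_cases hu hv) => [[i [hu' hv']]|[i [j [ij hu' hv' ug vg]]]].
    move: huv; rewrite (psi_in hu') (psi_in hv').
    exact: (code_inj (wb i) (length_le_max i) hu' hv').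
  have [_ /eqP] := cross_code ij hu' hv' ug vg.
  by rewrite -(psi_in hu') -(psi_in hv') huv.
- move=> u v hu hv uv; case: (vertex_pair_cases hu hv) => [[i [hu' hv']]|[i [j [ij hu' hv' ug vg]]]].
    rewrite (union_edge hu' hv' uv) (psi_in hu') (psi_in hv').
    exact: (code_edge g m i (wb i) (bip i) (length_le_max i) hu' hv' uv).
  have [[o same] _] := cross_code ij hu' hv' ug vg.
  split=> [/(cross_nonadjacent ij hu' hv' ug vg) //|/(_ o)].
  by rewrite (psi_in hu') (psi_in hv') same eqxx.
- move=> v /bigcupP [i _ hv] o o0; rewrite (psi_in hv) code_first //.
  apply: leq_trans (colour_lt_chromatic g (wb i) hv) _.
  apply: chromatic_sub; first exact: bigcup_sup.
  by move=> u w huw; apply/existsP; exists i.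
Qed.

Lemma union_subsingleton : L = 0 -> {in unionV V &, forall u v, u = v}.
Proof.
move=> L0 u v hu hv.
have l0 i : l i = 0 by apply/eqP; rewrite -leqn0 -L0 length_le_max.
case: (vertex_pair_cases hu hv) => [[i [hu' hv']]|[i [j [ij hu' _ ug _]]]].
  exact: (encoding_length0 (wb i) (l0 i) hu' hv').
by case/eqP: ug; exact: (encoding_length0 (wb i) (l0 i) hu' (shared_in ij)).
Qed.

End Union.

Theorem lemma2 (T : finType) (k : nat) (hk : 1 <= k)
  (V : 'I_k -> {set T}) (E : 'I_k -> rel T) (l : 'I_k -> nat)
  (phi : forall i : 'I_k, T -> (l i).-tuple nat) :
  (forall i, simple_graph (V i) (E i)) ->
  (forall i, bipartite (V i) (E i)) ->
  (exists g : T, forall i j : 'I_k, i != j -> V i :&: V j = [set g]) ->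
  (forall i, well_begun_encoding (V i) (E i) (phi i)) ->
  exists psi : T -> (\max_(i < k) l i + up_log 2 k).-tuple nat,
    well_begun_encoding (unionV V) (unionE E) psi.
Proof.
move=> simple bip [g shared] wb.
case: (posnP (\max_(i < k) l i)) => [L0|L_gt0].
  eexists; apply: subsingleton_encoding.
  exact: (union_subsingleton shared wb L0).
by exists (psi V phi g hk); apply: psi_encoding.
Qed.
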